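(* Assume the travel times $\tau$ have a convex potential $\Phi$, all externality functions $g_{i,p,j}$ are constant, and let $B$ be a Pareto-minimal budget vector. Then a feasible flow $x\in\mathcal F$ is implementable and respects $B$ if and only if $x$ is an optimal solution of \[ \min_{y\in\mathcal F}\Phi(y)\quad\text{s.t.}\quad G_j(y)\le B_j\ \text{ for all } j\in J. \]
   Context: Let $G=(V,E)$ be a directed graph and $I$ a finite set of commodities; commodity $i$ has source $s_i$, sink $t_i$, demand $d_i>0$; $\mathcal P_i$ is its set of simple $s_i$–$t_i$ paths, $\mathcal P=\{(i,p)\}$. A flow $x\in\mathbb{R}^{\mathcal P}_{\ge0}$ is feasible if $\sum_{p\in\mathcal P_i}x_{i,p}=d_i$ for all $i$; $\mathcal F$ is the set of feasible flows. $J$ is a finite set of externality classes with constant externality factors $g_{i,p,j}\ge0$, $G_j(x)=\sum_{(i,p)}g_{i,p,j}x_{i,p}$; travel times $\tau_{i,p}:\mathcal F\to\mathbb{R}$ with a potential, i.e., a differentiable $\Phi:\mathbb{R}^{\mathcal P}\to\mathbb{R}$ with $\tau_{i,p}(x)=\partial\Phi/\partial x_{i,p}(x)$ on $\mathcal F$, here convex. For $\lambda\in\mathbb{R}^J_{\ge0}$, $c^\lambda_{i,p}=\tau_{i,p}+\sum_j\lambda_jg_{i,p,j}$; $x\in\mathrm{WE}(\lambda)$ means $x\in\mathcal F$ and $x_{i,p}>0$ implies $c^\lambda_{i,p}(x)\le c^\lambda_{i,q}(x)$ for all $q\in\mathcal P_i$. $x$ is implementable if $x\in\mathrm{WE}(\lambda)$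 for some $\lambda\in\mathbb{R}^J_{\ge0}$, and respects $B$ if $G_j(x)\le B_j$ for all $j$. A budget $B$ is feasible if some feasible flow respects it, and Pareto-minimal if it is feasible and no other feasible $B'\ne B$ has $B'_j\le B_j$ for all $j$. *)

From HB Require Import structures.
From mathcomp Require Import all_boot all_order all_algebra.
From mathcomp Require Import all_classical all_reals all_analysis.
Set Implicit Arguments. Unset Strict Implicit. Unset Printing Implicit Defensive.
Import Order.TTheory GRing.Theory Num.Theory.
Import numFieldNormedType.Exports.
Local Open Scope ring_scope.

(** Sequences of length at most #|V|, as a finite type (every simple path
    of a graph on V has at most #|V| vertices). *)
Definition bseq (V : finType) : finType := {n : 'I_#|V|.+1 & n.-tuple V}.
Definition bseq_val (V : finType) (b : bseq V) : seq V := tagged b.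

Definition is_simple_path (V : finType) (E : rel V) (s t : V) (p : seq V) : bool :=
  if p is x :: p' then [&& x == s, path E x p', last x p' == t & uniq p]
  else false.

Section Model.
Variables (R : realType) (V : finType) (E : rel V) (I : finType) (s t : I -> V).

Definition PT : finType :=
  {ip : I * bseq V | is_simple_path E (s ip.1) (t ip.1) (bseq_val ip.2)}.

Definition com (ip : PT) : I := (sval ip).1.

Definition flow := 'rV[R]_#|PT|.
Definition fx (x : flow) (ip : PT) : R := x ord0 (enum_rank ip).
Definition unitv (ip : PT) : flow := delta_mx ord0 (enum_rank ip).

Variable (d : I -> R).
Definition feasible (x : flow) : Prop :=
  (forall ip, 0 <= fx x ip) /\
  (forall i, \sum_(ip : PT | com ip == i) fx x ip = d i).

Variables (J : finType) (g : PT -> J -> R).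
Definition Gext (x : flow) (j : J) : R := \sum_(ip : PT) g ip j * fx x ip.

Variable (tau : PT -> flow -> R).
Definition cost (lam : J -> R) (ip : PT) (x : flow) : R :=
  tau ip x + \sum_(j : J) lam j * g ip j.

Definition WE (lam : J -> R) (x : flow) : Prop :=
  feasible x /\
  forall ip iq : PT, com ip = com iq -> 0 < fx x ip -> cost lam ip x <= cost lam iq x.

Definition implementable (x : flow) : Prop :=
  exists lam : J -> R, (forall j, 0 <= lam j) /\ WE lam x.

Definition respects (B : J -> R) (x : flow) : Prop := forall j, Gext x j <= B j.

Definition feasible_budget (B : J -> R) : Prop := exists y, feasible y /\ respects B y.

Definition pareto_minimal (B : J -> R) : Prop :=
  feasible_budget B /\
  forall B' : J -> R, feasible_budget B' -> (forall j, B' j <= B j) -> B' = B.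

Definition is_potential (Phi : flow -> R) : Prop :=
  (forall x : flow, differentiable Phi x) /\
  (forall x, feasible x -> forall ip, tau ip x = 'D_(unitv ip) Phi x).

Definition optimal (Phi : flow -> R) (B : J -> R) (x : flow) : Prop :=
  feasible x /\ respects B x /\
  forall y, feasible y -> respects B y -> Phi x <= Phi y.
End Model.

Definition convex_fun (R : realType) (n : nat) (Phi : 'rV[R]_n -> R) : Prop :=
  @convex_function R 'rV[R]_n setT Phi.

From HB Require Import structures.
From mathcomp Require Import all_boot all_order all_algebra.
From mathcomp Require Import all_classical all_reals all_analysis.
From mathcomp Require Import ring lra.
Import Order.TTheory GRing.Theory Num.Theory.
Import numFieldNormedType.Exports.
Set Implicit Arguments. Unset Strict Implicit.
Local Open Scope ring_scope.

(** Pareto-minimality forces [G x = B] for every feasible [x] respecting [B],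
    since [G x] is itself a feasible budget below [B].  Both directions are then
    first-order optimality arguments for the convex program.  If [x] is an
    equilibrium for tolls [lam >= 0], summing the equilibrium inequalities
    against a feasible [y] gives [sum_p (y_p - x_p) c^lam_p(x) >= 0]; as
    [lam . G y <= lam . B = lam . G x], this says [D_(y - x) Phi x >= 0], and
    convexity yields [Phi y >= Phi x].  Conversely, at an optimum the derivative
    of [Phi] is nonnegative along every direction that keeps the demands, does
    not decrease unused paths and does not increase any [G_j]; Farkas' lemma
    writes [tau x] as a nonnegative combination of these constraints, the
    coefficients of the [G_j] are the tolls, and those of the unused paths are
    the slack in the equilibrium inequalities. *)

Section Farkas.
Variables (R : realFieldType) (W : lmodType R).

Lemma scalar_ge0_eq0 (f : W -> R) : scalar f -> (forall y, 0 <= f y) -> forall y, f y = 0.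
Proof.
move=> sf f_ge0 y; have f0 : f 0 = 0.
  by have := sf 1 0 0; rewrite scaler0 addr0 mul1r; lra.
have := sf (-1) y 0; rewrite addr0 scaleN1r f0 addr0 mulN1r => fN.
by have := f_ge0 y; have := f_ge0 (- y); rewrite fN; lra.
Qed.

Lemma farkas m (a : 'I_m -> W -> R) (c : W -> R) :
  (forall k, scalar (a k)) -> scalar c ->
  (forall y, (forall k, 0 <= a k y) -> 0 <= c y) ->
  exists2 mu : 'I_m -> R, forall k, 0 <= mu k & forall y, c y = \sum_k mu k * a k y.
Proof.
elim: m a c => [|m IH] a c sa sc ac.
  exists (fun=> 0) => // y; rewrite big_ord0.
  by apply: scalar_ge0_eq0 => // z; apply: ac; case.
pose a' k := a (lift ord_max k); pose al := a ord_max.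
pose mu_ext (mu : 'I_m -> R) ml k := oapp mu ml (unlift ord_max k).
have sum_ext mu ml y : \sum_k mu_ext mu ml k * a k y = ml * al y + \sum_k mu k * a' k y.
  by rewrite (bigD1_ord ord_max) //= /mu_ext unlift_none; under eq_bigr do rewrite liftK.
have [ac'|] := pselect (forall y, (forall k, 0 <= a' k y) -> 0 <= c y).
  have [mu mu0 cE] := IH a' c (fun k => sa _) sc ac'.
  exists (mu_ext mu 0) => [k|y]; first by rewrite /mu_ext; case: unlift.
  by rewrite sum_ext mul0r add0r.
move=> /existsNP [y0 /not_implyP [a'y0 /negP]]; rewrite -ltNge => cy0.
have aly0 : al y0 < 0.
  rewrite ltNge; apply/negP => aly0; suff: 0 <= c y0 by rewrite leNgt cy0.
  by apply: ac => k; case: (unliftP ord_max k) => [j ->|->]; [exact: a'y0|].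
have sal : scalar al := sa ord_max.
(* [P] projects onto the kernel of [al] along [y0]. *)
pose P y := y - (al y / al y0) *: y0.
have fP f : scalar f -> forall y, f (P y) = f y - al y / al y0 * f y0.
  by move=> sf y; rewrite /P [y - _]addrC -scaleNr sf mulNr addrC.
have sfP f : scalar f -> scalar (f \o P).
  by move=> sf r u v; rewrite /= !fP // !sf sal; ring.
have acP y : (forall k, 0 <= a' k (P y)) -> 0 <= c (P y).
  move=> ay; apply: ac => k; case: (unliftP ord_max k) => [j ->|->]; first exact: ay.
  by rewrite -/al fP // divfK ?subrr // lt_eqF.
have [mu mu0 cPE] := IH (fun k => a' k \o P) (c \o P) (fun k => sfP _ (sa _)) (sfP _ sc) acP.
pose S := \sum_k mu k * a' k y0.
have S0 : 0 <= S by apply: sumr_ge0 => k _; rewrite mulr_ge0.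
exists (mu_ext mu ((c y0 - S) / al y0)) => [k|y].
  rewrite /mu_ext; case: unlift => [k'|/=]; first exact: mu0.
  by rewrite mulr_le0 ?invr_le0 ?ltW //; lra.
have := cPE y; rewrite /= fP // sum_ext.
under eq_bigr do rewrite (fP (a' _) (sa _)) mulrBr mulrCA.
rewrite sumrB -mulr_sumr -/S => cPy.
have -> : \sum_k mu k * a' k y = c y - al y / al y0 * c y0 + al y / al y0 * S.
  by rewrite cPy subrK.
by field; rewrite lt_eqF.
Qed.

Lemma farkas_fin (K : finType) (a : K -> W -> R) (c : W -> R) :
  (forall k, scalar (a k)) -> scalar c ->
  (forall y, (forall k, 0 <= a k y) -> 0 <= c y) ->
  exists2 mu : K -> R, forall k, 0 <= mu k & forall y, c y = \sum_k mu k * a k y.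
Proof.
move=> sa sc ac.
have ac' y : (forall k : 'I_#|K|, 0 <= a (enum_val k) y) -> 0 <= c y.
  by move=> ay; apply: ac => k; rewrite -(enum_rankK k).
have [mu mu0 cE] := @farkas _ (fun k => a (enum_val k)) c (fun k => sa _) sc ac'.
exists (fun k => mu (enum_rank k)) => [k|y]; first exact: mu0.
rewrite cE (reindex enum_rank) /=; last by exists enum_val => k _; rewrite ?enum_rankK ?enum_valK.
by apply: eq_bigr => k _; rewrite enum_rankK.
Qed.

End Farkas.

Section DirectionalDerivative.
Variables (R : realType) (V : normedModType R) (f : V -> R) (x v : V).
Hypothesis df : differentiable f x.
Local Open Scope classical_set_scope.

Let derive_at_right :
  (fun h : R => h^-1 *: (f (h *: v + x) - f x)) @ 0^'+ --> 'D_v f x.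
Proof. exact: cvg_dnbhs_at_right (@diff_derivable _ _ _ f x v df). Qed.

Let near_right_interval (e : R) : 0 < e -> \forall t \near (0 : R)^'+, 0 < t < e.
Proof.
move=> e0; near=> t; apply/andP; split; near: t; first exact: nbhs_right_gt.
exact: nbhs_right_lt.
Unshelve. all: by end_near.
Qed.

Lemma derive_ge_right C e : 0 < e ->
  (forall t, 0 < t < e -> C <= t^-1 * (f (x + t *: v) - f x)) -> C <= 'D_v f x.
Proof.
move=> e0 Cle; apply: (cvgr_to_ge derive_at_right).
near=> t; rewrite [t *: v + x]addrC; apply: Cle; near: t; exact: near_right_interval.
Unshelve. all: by end_near.
Qed.

Lemma derive_le_right C e : 0 < e ->
  (forall t, 0 < t < e -> t^-1 * (f (x + t *: v) - f x) <= C) -> 'D_v f x <= C.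
Proof.
move=> e0 leC; apply: (cvgr_to_le derive_at_right).
near=> t; rewrite [t *: v + x]addrC; apply: leC; near: t; exact: near_right_interval.
Unshelve. all: by end_near.
Qed.

End DirectionalDerivative.

Lemma convex_derive_le (R : realType) (V : normedModType R) (f : V -> R) x y :
  convex_function setT f -> differentiable f x -> 'D_(y - x) f x <= f y - f x.
Proof.
move=> cf df; apply: (derive_le_right df ltr01) => t /andP [t0 t1].
have segment : x + t *: (y - x) = t *: y + (1 - t) *: x.
  by rewrite scalerBr scalerBl scale1r addrCA addrC.
have fconv : f (x + t *: (y - x)) <= t * f y + (1 - t) * f x.
  by rewrite segment; exact: (cf (Itv01 (ltW t0) (ltW t1)) y x (in_setT _) (in_setT _)).
by rewrite ler_pdivrMl //; lra.
Qed.

Section IndicatorSums.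
Variable R : pzSemiRingType.

Lemma sumr_mkcond_nat (T : finType) (P : pred T) (F : T -> R) :
  \sum_(i | P i) F i = \sum_i (P i)%:R * F i.
Proof. by rewrite big_mkcond; apply: eq_bigr => i _; rewrite mulr_natl mulrb. Qed.

Lemma sumr_mul_eq (T : finType) (F : T -> R) (a : T) : \sum_i F i * (a == i)%:R = F a.
Proof.
rewrite (bigD1 a) //= eqxx mulr1 big1 ?addr0 // => i.
by rewrite eq_sym => /negbTE ->; rewrite mulr0.
Qed.

End IndicatorSums.

Section Flows.
Variables (R : realType) (V : finType) (E : rel V) (I : finType) (s t : I -> V).

Lemma fx_scalar (ip : PT E s t) : scalar (fun v : flow R E s t => fx v ip).
Proof. by move=> r y z; rewrite /fx !mxE. Qed.

Lemma fxB (y z : flow R E s t) ip : fx (y - z) ip = fx y ip - fx z ip.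
Proof. by rewrite /fx !mxE. Qed.

Lemma fx_unitv (ip iq : PT E s t) : fx (unitv R iq) ip = (iq == ip)%:R.
Proof. by rewrite /fx /unitv mxE eqxx /= (can_eq enum_rankK) eq_sym. Qed.

Lemma sum_fx_unitv (F : PT E s t -> R) iq : \sum_ip F ip * fx (unitv R iq) ip = F iq.
Proof. by under eq_bigr do rewrite fx_unitv; rewrite sumr_mul_eq. Qed.

Lemma scalar_sum_fx (w : PT E s t -> R) :
  scalar (fun v : flow R E s t => \sum_ip w ip * fx v ip).
Proof.
move=> r y z; rewrite mulr_sumr -big_split; apply: eq_bigr => ip _.
by rewrite fx_scalar mulrDr mulrCA.
Qed.

Lemma flow_sum_unitv (v : flow R E s t) : v = \sum_ip fx v ip *: unitv R ip.
Proof.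
rewrite {1}(row_sum_delta v) (reindex (@enum_rank (PT E s t))) //.
by exists enum_val => i _; rewrite ?enum_rankK ?enum_valK.
Qed.

Lemma farkas_flow (K : finType) (w : K -> PT E s t -> R) (c : PT E s t -> R) :
  (forall v : flow R E s t,
    (forall k, 0 <= \sum_ip w k ip * fx v ip) -> 0 <= \sum_ip c ip * fx v ip) ->
  exists2 mu : K -> R, forall k, 0 <= mu k & forall ip, c ip = \sum_k mu k * w k ip.
Proof.
move=> wc; have [mu mu0 cE] := farkas_fin (fun k => scalar_sum_fx (w k)) (scalar_sum_fx c) wc.
exists mu => // iq; have := cE (unitv R iq); rewrite sum_fx_unitv => ->.
by apply: eq_bigr => k _; rewrite sum_fx_unitv.
Qed.

Variable d : I -> R.

Lemma wardrop_sum_le (x y : flow R E s t) (c : PT E s t -> R) : (forall i, 0 < d i) ->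
  feasible d x -> feasible d y ->
  (forall ip iq, com ip = com iq -> 0 < fx x ip -> c ip <= c iq) ->
  \sum_ip c ip * fx x ip <= \sum_ip c ip * fx y ip.
Proof.
move=> hd [x0 dx] [y0 dy] cmin.
(* A transport plan from [x] to [y] inside each commodity. *)
pose m ip iq := (com iq == com ip)%:R * (fx x ip * fx y iq / d (com ip)).
have d_neq0 i : d i != 0 by rewrite gt_eqF.
have m_row ip : \sum_iq m ip iq = fx x ip.
  by rewrite -sumr_mkcond_nat -mulr_suml -mulr_sumr dy mulfK.
have m_col iq : \sum_ip m ip iq = fx y iq.
  rewrite -sumr_mkcond_nat (eq_bigl (fun ip => com ip == com iq)) => [|ip]; last exact: eq_sym.
  under eq_bigr => ip /eqP -> do rewrite mulrAC.
  by rewrite -!mulr_suml dx divff ?mul1r.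
have m_ge0 ip iq : 0 <= m ip iq.
  by rewrite /m mulr_ge0 ?ler0n // divr_ge0 ?mulr_ge0 ?x0 ?y0 ?ltW.
rewrite (eq_bigr (fun ip => \sum_iq m ip iq * c ip)) => [|ip _]; last first.
  by rewrite -mulr_suml m_row mulrC.
rewrite [X in _ <= X](eq_bigr (fun iq => \sum_ip m ip iq * c iq)) => [|iq _]; last first.
  by rewrite -mulr_suml m_col mulrC.
rewrite [X in _ <= X]exchange_big /=; apply: ler_sum => ip _; apply: ler_sum => iq _.
have [xp|] := ltP 0 (fx x ip); last first.
  move=> xle0; have x_ip0 : fx x ip = 0 by apply/eqP; rewrite eq_le xle0 x0.
  by rewrite /m x_ip0 !(mul0r, mulr0).
have [same|differ] := eqVneq (com iq) (com ip); last by rewrite /m (negbTE differ) !mul0r.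
by rewrite ler_wpM2l // cmin.
Qed.

Lemma feasible_near_dir (x v : flow R E s t) : feasible d x ->
  (forall i, \sum_(ip | com ip == i) fx v ip = 0) ->
  (forall ip, fx x ip = 0 -> 0 <= fx v ip) ->
  exists2 e, 0 < e & forall u, 0 < u < e -> feasible d (x + u *: v).
Proof.
move=> [x0 dx] dv vpos.
(* Terms with [fx x ip = 0] contribute [0] to [S]: such coordinates are covered by [vpos]. *)
pose S := \sum_ip `|fx v ip| / fx x ip.
have S0 : 0 <= S by apply: sumr_ge0 => ip _; rewrite divr_ge0 ?x0.
exists (1 + S)^-1 => [|u /andP [u0 uS]]; first by rewrite invr_gt0; lra.
have fxu ip : fx (x + u *: v) ip = fx x ip + u * fx v ip.
  by rewrite addrC fx_scalar addrC.
split=> [ip|i]; last first.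
  by under eq_bigr do rewrite fxu; rewrite big_split /= -mulr_sumr dx dv mulr0 addr0.
rewrite fxu; have [xp|xle0] := ltP 0 (fx x ip); last first.
  have x_ip0 : fx x ip = 0 by apply/eqP; rewrite eq_le xle0 x0.
  by rewrite x_ip0 add0r mulr_ge0 ?vpos ?ltW.
have vS : `|fx v ip| / fx x ip <= S.
  by rewrite /S (bigD1 ip) //= lerDl sumr_ge0 // => iq _; rewrite divr_ge0 ?x0.
have uS1 : u * (1 + S) < 1 by rewrite -ltr_pdivlMr ?mul1r //; lra.
have step_small : u * `|fx v ip| < fx x ip.
  rewrite -[`|_|](divfK (lt0r_neq0 xp)) mulrA -[X in _ < X]mul1r ltr_pM2r //.
  have : u * (`|fx v ip| / fx x ip) <= u * S by rewrite ler_pM2l.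
  lra.
have : - (u * `|fx v ip|) <= u * fx v ip.
  by rewrite -mulrN ler_pM2l // lerNnormlW.
lra.
Qed.

Variables (J : finType) (g : PT E s t -> J -> R) (tau : PT E s t -> flow R E s t -> R).

Lemma derive_potential Phi x v :
  is_potential d tau Phi -> feasible d x ->
  'D_v Phi x = \sum_ip tau ip x * fx v ip.
Proof.
move=> [dPhi tauE] hx; rewrite deriveE // [in LHS](flow_sum_unitv v) linear_sum.
apply: eq_bigr => ip _; rewrite linearZ /= -deriveE // -tauE //; exact: mulrC.
Qed.

Lemma sum_cost_fx (lam : J -> R) (x z : flow R E s t) :
  \sum_ip cost g tau lam ip x * fx z ip =
  \sum_ip tau ip x * fx z ip + \sum_j lam j * Gext g z j.
Proof.
rewrite /cost /Gext; under eq_bigr do rewrite mulrDl; rewrite big_split /=.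
congr (_ + _); under eq_bigr do rewrite mulr_suml; rewrite exchange_big /=.
by apply: eq_bigr => j _; rewrite mulr_sumr; apply: eq_bigr => ip _; rewrite mulrA.
Qed.

Lemma pareto_respects_eq (B : J -> R) x :
  pareto_minimal d g B -> feasible d x -> respects g B x -> Gext g x = B.
Proof. by move=> [_ minB] hx hr; apply: minB hr; exists x; split => // j. Qed.

Definition feasible_dir (x v : flow R E s t) : Prop :=
  [/\ forall i, \sum_(ip | com ip == i) fx v ip = 0,
      forall ip, fx x ip = 0 -> 0 <= fx v ip &
      forall j, Gext g v j <= 0].

Lemma optimal_dir_ge0 Phi (B : J -> R) x v :
  is_potential d tau Phi -> optimal d g Phi B x -> Gext g x = B ->
  feasible_dir x v -> 0 <= \sum_ip tau ip x * fx v ip.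
Proof.
move=> hpot [hx [_ minPhi]] GB [dv vpos Gv].
have [e e0 feas] := feasible_near_dir hx dv vpos.
rewrite -(derive_potential v hpot hx); apply: (derive_ge_right (hpot.1 x) e0) => u ue.
have [u0 _] := andP ue.
have resp : respects g B (x + u *: v).
  move=> j; rewrite -GB /Gext addrC scalar_sum_fx -[X in _ <= X]add0r lerD2r.
  exact: mulr_ge0_le0 (ltW u0) (Gv j).
apply: mulr_ge0; first by rewrite invr_ge0 ltW.
by rewrite subr_ge0; exact: minPhi (feas u ue) resp.
Qed.

Lemma dir_ge0_implementable x : feasible d x ->
  (forall v, feasible_dir x v -> 0 <= \sum_ip tau ip x * fx v ip) ->
  implementable d g tau x.
Proof.
move=> hx dirPhi.
(* One weight vector per constraint of [feasible_dir x]: each demand equality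
   gives two opposite inequalities, and [0 <= v_q] is switched off on used [q]. *)
pose K := ((I + I) + PT E s t + J)%type.
pose w (k : K) ip : R := match k with
  | inl (inl (inl i)) => (com ip == i)%:R
  | inl (inl (inr i)) => - (com ip == i)%:R
  | inl (inr q) => (fx x q == 0)%:R * (q == ip)%:R
  | inr j => - g ip j
  end.
have w_dir v : (forall k, 0 <= \sum_ip w k ip * fx v ip) -> feasible_dir x v.
  move=> wv; split=> [i|q xq0|j].
  - have := wv (inl (inl (inl i))); have := wv (inl (inl (inr i))).
    under [X in _ <= X -> _]eq_bigr do rewrite mulNr.
    by rewrite /= sumrN => h1 h2; rewrite sumr_mkcond_nat; lra.
  - have := wv (inl (inr q)); under eq_bigr do rewrite mulrAC.
    by rewrite /= sumr_mul_eq xq0 eqxx mul1r.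
  - have := wv (inr j); under eq_bigr do rewrite mulNr.
    by rewrite sumrN oppr_ge0.
have [mu mu0 tauE] := farkas_flow (fun v wv => dirPhi v (w_dir v wv)).
pose lam j := mu (inr j).
have costE q : cost g tau lam q x = mu (inl (inl (inl (com q))))
    - mu (inl (inl (inr (com q)))) + mu (inl (inr q)) * (fx x q == 0)%:R.
  have sumN (F : I -> R) : \sum_i F i * - (com q == i)%:R = - F (com q).
    by rewrite -sumr_mul_eq -sumrN; apply: eq_bigr => i _; rewrite mulrN.
  have sum_unused : \sum_p mu (inl (inr p)) * ((fx x p == 0)%:R * (p == q)%:R) =
      mu (inl (inr q)) * (fx x q == 0)%:R.
    by under eq_bigr => p _ do rewrite mulrA [p == q]eq_sym; rewrite sumr_mul_eq.
  have sum_budget : \sum_j mu (inr j) * - g q j = - \sum_j lam j * g q j.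
    by rewrite -sumrN; apply: eq_bigr => j _; rewrite mulrN.
  by rewrite /cost tauE !big_sumType /= sumr_mul_eq sumN sum_unused sum_budget addrNK.
exists lam; split=> [j|]; first exact: mu0.
split=> // ip iq same xp; rewrite !costE same (gt_eqF xp) mulr0 addr0 lerDl.
by rewrite mulr_ge0 ?mu0.
Qed.

Lemma implementable_optimal Phi (B : J -> R) x : (forall i, 0 < d i) ->
  is_potential d tau Phi -> convex_fun Phi -> pareto_minimal d g B ->
  implementable d g tau x -> respects g B x -> optimal d g Phi B x.
Proof.
move=> hd hpot hconv hB [lam [lam0 [hx lam_eq]]] hr; split=> //; split=> // y hy hry.
have GB := pareto_respects_eq hB hx hr.
have := wardrop_sum_le hd hx hy lam_eq; rewrite !sum_cost_fx => ward.
have budget : \sum_j lam j * Gext g y j <= \sum_j lam j * Gext g x j.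
  by apply: ler_sum => j _; rewrite GB ler_wpM2l ?hry.
have := convex_derive_le y hconv (hpot.1 x); rewrite (derive_potential _ hpot hx).
by under eq_bigr do rewrite fxB mulrBr; rewrite sumrB; lra.
Qed.

End Flows.

Unset Implicit Arguments. Set Strict Implicit.

Theorem lemma4p4 (R : realType) (V : finType) (E : rel V) (I : finType)
  (s t : I -> V) (d : I -> R) (hd : forall i, 0 < d i)
  (J : finType) (g : PT E s t -> J -> R) (hg : forall ip j, 0 <= g ip j)
  (tau : PT E s t -> flow R E s t -> R) (Phi : flow R E s t -> R)
  (hpot : is_potential d tau Phi) (hconv : convex_fun Phi)
  (B : J -> R) (hB : pareto_minimal d g B)
  (x : flow R E s t) (hx : feasible d x) :
  (implementable d g tau x /\ respects g B x) <-> optimal d g Phi B x.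
Proof.
split=> [[impl resp]|opt]; first exact: implementable_optimal hd hpot hconv hB impl resp.
have GB := pareto_respects_eq hB hx opt.2.1.
split; last exact: opt.2.1.
by apply: dir_ge0_implementable hx _ => v; exact: optimal_dir_ge0 hpot opt GB.
Qed.
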